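(* Let $\mathbf{a}$ be a CSCA and let $\xi\in\mathcal{P}^2$ be reflection invariant (both entries in $\mathcal{R}$) with $\gcd(\xi_+,\xi_-)=1$. For $t\in\mathbb{N}$ let $n(t,\xi)=\deg(\mathbf{a}^t\xi)$, so that the stabilizer generator $W(\mathbf{a}^t\xi)$ has length $2n(t,\xi)+1$. Then $$\lim_{t\to\infty}\frac{1}{t}n(t,\xi)=\deg(\mathrm{tr}\,\mathbf{a}).$$
   Context: $\mathcal{P}$ = Laurent polynomials in $u$ over $\mathbb{Z}_2$, $\mathcal{R}$ its subring of palindromes ($p(u^{-1})=p(u)$). A CSCA is a $2\times2$ matrix over $\mathcal{R}$ with determinant $1$. For a palindrome $p\in\mathcal{R}$, $\deg p$ is the highest exponent of $u$ occurring in $p$ (with $\deg p=0$ for constants, including $0$); for a vector of palindromes, $\deg$ is the maximum of the degrees of its entries. $W(\xi)$ denotes the tensor product of Pauli matrices labelled by $\xi$ (site $x$ carries $W(\xi_+(x),\xi_-(x))$ with $W(1,0)=\sigma_1$, $W(0,1)=\sigma_3$, $W(1,1)\propto\sigma_2$, $W(0,0)=\mathbb{1}$). *)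

From HB Require Import structures.
From mathcomp Require Import all_boot all_order all_algebra.
From mathcomp Require Import all_classical all_reals all_analysis.
Set Implicit Arguments. Unset Strict Implicit. Unset Printing Implicit Defensive.
Import Order.TTheory GRing.Theory Num.Theory.
Local Open Scope ring_scope.

(* A Laurent polynomial in u over Z_2, represented as u^(-lshift) * lpoly(u).
   Equality of Laurent polynomials is equality of all coefficients (leq). *)
Record laurent := Laurent { lshift : nat; lpoly : {poly 'F_2} }.

Definition lcoef (L : laurent) (k : int) : 'F_2 :=
  match (k + (lshift L)%:Z)%R with
  | Posz m => (lpoly L)`_m
  | Negz _ => 0
  end.

Definition leq (L M : laurent) : Prop := forall k : int, lcoef L k = lcoef M k.

Definition lzero : laurent := Laurent 0 0.
Definition lone : laurent := Laurent 0 1.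
Definition ladd (L M : laurent) : laurent :=
  Laurent (lshift L + lshift M)%N
          (lpoly L * 'X^(lshift M) + lpoly M * 'X^(lshift L)).
Definition lopp (L : laurent) : laurent := Laurent (lshift L) (- lpoly L).
Definition lsub (L M : laurent) : laurent := ladd L (lopp M).
Definition lmul (L M : laurent) : laurent :=
  Laurent (lshift L + lshift M)%N (lpoly L * lpoly M).

(* palindromes: p(u^{-1}) = p(u), i.e. coef(-k) = coef(k) *)
Definition palindrome (L : laurent) : Prop := forall k : int, lcoef L (- k) = lcoef L k.

(* highest exponent of u occurring in L; 0 for L = 0 *)
Definition ldeg (L : laurent) : int :=
  if lpoly L == 0 then 0 else ((size (lpoly L)).-1)%:Z - (lshift L)%:Z.

Definition ldvd (d x : laurent) : Prop := exists q, leq (lmul d q) x.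
Definition lunit (x : laurent) : Prop := exists y, leq (lmul x y) lone.
Definition lgcd_one (x y : laurent) : Prop :=
  forall d, ldvd d x -> ldvd d y -> lunit d.

(* 2x2 matrices over P, vectors in P^2 as pairs (xi_+, xi_-) *)
Definition lmat := 'M[laurent]_2.
Definition i0 : 'I_2 := ord0.
Definition i1 : 'I_2 := ord_max.

Definition CSCA (a : lmat) : Prop :=
  (forall i j, palindrome (a i j)) /\
  leq (lsub (lmul (a i0 i0) (a i1 i1)) (lmul (a i0 i1) (a i1 i0))) lone.

Definition ltr (a : lmat) : laurent := ladd (a i0 i0) (a i1 i1).

Definition lact (a : lmat) (v : laurent * laurent) : laurent * laurent :=
  (ladd (lmul (a i0 i0) v.1) (lmul (a i0 i1) v.2),
   ladd (lmul (a i1 i0) v.1) (lmul (a i1 i1) v.2)).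

Definition lpow_act (a : lmat) (t : nat) (v : laurent * laurent) := iter t (lact a) v.

Definition vdeg (v : laurent * laurent) : int := Num.max (ldeg v.1) (ldeg v.2).

Definition nlen (a : lmat) (xi : laurent * laurent) (t : nat) : int :=
  vdeg (lpow_act a t xi).

(* In the fraction field of F_2[u] the Cayley-Hamilton identity for a 2x2 matrix of
   determinant 1 reads a^2 = (tr a) a + 1, since -1 = 1.  Hence each component of
   x_t = a^t xi satisfies x_(t+2) = T x_(t+1) + x_t with T = tr a, and because
   palindromes have nonnegative degree, n_(t+2) <= max (d + n_(t+1)) n_t with d = deg T,
   with equality as soon as n_t < d + n_(t+1) (use a component of x_(t+1) of maximal
   degree; it is nonzero since det a = 1 and xi, having coprime entries, is nonzero).
   A nonnegative integer sequence obeying these two rules is d t + O(1): for d = 0 it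
   is bounded, and for d > 0 the strict case must occur, after which the sequence
   grows by exactly d at each step. *)

From Pilot Require Import Defs.
From HB Require Import structures.
From mathcomp Require Import all_boot all_order all_algebra.
From mathcomp Require Import all_classical all_reals all_analysis.
From mathcomp Require Import ring lra zify.
Import Defs.
Set Implicit Arguments. Unset Strict Implicit. Unset Printing Implicit Defensive.
Import Order.TTheory GRing.Theory Num.Theory numFieldNormedType.Exports.
Local Open Scope classical_set_scope.
Local Open Scope ring_scope.

Lemma lcoef_shift L m : lcoef L (m%:Z - (lshift L)%:Z) = (lpoly L)`_m.
Proof. by rewrite /lcoef subrK. Qed.

Lemma lcoef_below L k : k + (lshift L)%:Z < 0 -> lcoef L k = 0.
Proof. by rewrite /lcoef; case: (k + _). Qed.

Lemma lcoef_poly0 L k : lpoly L = 0 -> lcoef L k = 0.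
Proof. by move=> L0; rewrite /lcoef L0; case: (_ + _) => // m; rewrite coef0. Qed.

Lemma int_shift_cases (k : int) (s : nat) :
  (exists m : nat, k = m%:Z - s%:Z) \/ k + s%:Z < 0.
Proof.
case E: (k + s%:Z) => [m|m]; last by right.
by left; exists m; rewrite -E addrK.
Qed.

Lemma coef_lpolyMXn L j m :
  (lpoly L * 'X^j)`_m = lcoef L (m%:Z - (lshift L)%:Z - j%:Z).
Proof.
rewrite coefMXn; case: ltnP => jm; first by rewrite lcoef_below //; lia.
by rewrite -lcoef_shift; congr lcoef; lia.
Qed.

Lemma lcoefD L M k : lcoef (ladd L M) k = lcoef L k + lcoef M k.
Proof.
have [[m ->]|k_neg] := int_shift_cases k (lshift L + lshift M).
  rewrite (lcoef_shift (ladd L M)) coefD !coef_lpolyMXn.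
  by congr (lcoef _ _ + lcoef _ _); lia.
by rewrite !lcoef_below ?addr0 //=; lia.
Qed.

Lemma lcoef_support L i : lcoef L i != 0 ->
  - (lshift L)%:Z <= i < (size (lpoly L))%:Z - (lshift L)%:Z.
Proof.
have [[m ->]|i_neg] := int_shift_cases i (lshift L); last first.
  by rewrite lcoef_below ?eqxx.
rewrite lcoef_shift => nz.
have : (m < size (lpoly L))%N by rewrite ltnNge; apply: contra nz => ?; rewrite nth_default.
lia.
Qed.

Definition window_sum (V : nmodType) (b : int) (n : nat) (f : int -> V) : V :=
  \sum_(0 <= j < n) f (j%:Z + b).

Lemma window_sum_widen (V : nmodType) (f : int -> V) b n b' n' :
    (forall i, f i != 0 -> b <= i < b + n%:Z) ->
  b' <= b -> b + n%:Z <= b' + n'%:Z -> window_sum b' n' f = window_sum b n f.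
Proof.
move=> supp le_b'b le_end.
have [e be] : exists e : nat, b = b' + e%:Z by exists `|b - b'|%N; lia.
have zero_out j : ~~ (b <= j%:Z + b' < b + n%:Z) -> f (j%:Z + b') = 0.
  by move=> out; apply/eqP; apply: contraNT out => /supp.
rewrite /window_sum (big_cat_nat (leq0n e)) /=; last lia.
rewrite big_nat_cond big1 ?add0r; last first.
  by move=> j /andP[/andP[_ je] _]; apply: zero_out; lia.
rewrite (@big_cat_nat _ _ _ (e + n)) ?leq_addr //=; last lia.
rewrite [X in _ + X]big_nat_cond [X in _ + X]big1 ?addr0; last first.
  by move=> j /andP[/andP[ej _] _]; apply: zero_out; lia.
rewrite -{1}[e]add0n big_addn addKn.
by apply: eq_bigr => j _; congr f; lia.
Qed.

Lemma window_sum_opp (V : nmodType) (f : int -> V) (S : nat) :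
  window_sum (- S%:Z) (2 * S).+1 f = window_sum (- S%:Z) (2 * S).+1 (fun i => f (- i)).
Proof.
rewrite /window_sum big_nat_rev /= [LHS]big_nat_cond [RHS]big_nat_cond.
by apply: eq_bigr => j /andP[/andP[_ jS] _]; congr f; lia.
Qed.

(* With integer indices the out-of-range terms vanish, unlike the terms with a
   truncated subtraction [m - j] in [coefM]. *)
Lemma lcoefM_window L M k (S : nat) :
    (lshift L <= S)%N -> (size (lpoly L) <= S)%N ->
  lcoef (lmul L M) k = window_sum (- S%:Z) (2 * S).+1 (fun i => lcoef L i * lcoef M (k - i)).
Proof.
move=> sL_S szL_S; set f := fun i => _.
have f_supp i : f i != 0 ->
    - (lshift L)%:Z <= i < (size (lpoly L))%:Z - (lshift L)%:Z /\
    - (lshift M)%:Z <= k - i < (size (lpoly M))%:Z - (lshift M)%:Z.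
  by rewrite mulf_eq0 negb_or => /andP[/lcoef_support ? /lcoef_support ?].
have [[m km]|k_neg] := int_shift_cases k (lshift L + lshift M); last first.
  rewrite lcoef_below /=; last lia.
  by rewrite /window_sum big1 // => j _; apply/eqP; apply: contraT => /f_supp; lia.
have supp i : f i != 0 ->
    - (lshift L)%:Z <= i < - (lshift L)%:Z + (minn m.+1 (size (lpoly L)))%:Z.
  by move=> /f_supp; lia.
transitivity (window_sum (- (lshift L)%:Z) m.+1 f).
  rewrite km (lcoef_shift (lmul L M)) coefM /window_sum big_mkord.
  apply: eq_bigr => [[j lt_jm]] _ /=; rewrite /f km.
  rewrite -(lcoef_shift L j) -(lcoef_shift M (m - j)).
  by congr (lcoef _ _ * lcoef _ _); lia.
rewrite (window_sum_widen supp) ?lexx //; last lia.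
by rewrite (window_sum_widen supp) //; lia.
Qed.

Lemma palindromeD L M : palindrome L -> palindrome M -> palindrome (ladd L M).
Proof. by move=> PL PM k; rewrite !lcoefD PL PM. Qed.

Lemma palindromeM L M : palindrome L -> palindrome M -> palindrome (lmul L M).
Proof.
move=> PL PM k; set S := (lshift L + size (lpoly L))%N.
rewrite !(@lcoefM_window L M _ S) ?leq_addr ?leq_addl // window_sum_opp.
rewrite /window_sum; apply: eq_bigr => j _.
by rewrite PL -[in RHS]PM; congr (_ * lcoef M _); ring.
Qed.

Local Notation FF := {fraction {poly 'F_2}}.
Local Notation "x %:F" := (@FracField.tofrac _ x).

Definition lfrac (L : laurent) : FF := (lpoly L)%:F / ('X^(lshift L))%:F.

Lemma polyXn_neq0 n : ('X^n : {poly 'F_2}) != 0.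
Proof. by rewrite expf_neq0 // polyX_eq0. Qed.

Lemma tofracXn_neq0 n : (('X^n : {poly 'F_2})%:F : FF) != 0.
Proof. by rewrite tofrac_eq0 polyXn_neq0. Qed.

Lemma lfracD L M : lfrac (ladd L M) = lfrac L + lfrac M.
Proof. by rewrite /lfrac /= addf_div ?tofracXn_neq0 // -!tofracM -tofracD -exprD. Qed.

Lemma lfracM L M : lfrac (lmul L M) = lfrac L * lfrac M.
Proof. by rewrite /lfrac /= mulf_div -!tofracM -exprD. Qed.

Lemma lfracB L M : lfrac (lsub L M) = lfrac L - lfrac M.
Proof. by rewrite /lsub lfracD /lfrac /= tofracN mulNr. Qed.

Lemma lfrac1 : lfrac lone = 1.
Proof. by rewrite /lfrac /= expr0 tofrac1 divr1. Qed.

Lemma lfrac_eq0 L : (lfrac L == 0) = (lpoly L == 0).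
Proof. by rewrite /lfrac mulf_eq0 invr_eq0 (negbTE (tofracXn_neq0 _)) orbF tofrac_eq0. Qed.

Lemma lfrac_eqP L M :
  reflect (lpoly L * 'X^(lshift M) = lpoly M * 'X^(lshift L)) (lfrac L == lfrac M).
Proof. by rewrite /lfrac eqr_div ?tofracXn_neq0 // -!tofracM tofrac_eq; apply: eqP. Qed.

Lemma leq_lfrac L M : leq L M -> lfrac L = lfrac M.
Proof.
move=> LM; apply/eqP/lfrac_eqP/polyP => m.
by rewrite !coef_lpolyMXn LM; congr lcoef; lia.
Qed.

Lemma ldeg_poly0 L : lpoly L = 0 -> ldeg L = 0.
Proof. by rewrite /ldeg => ->; rewrite eqxx. Qed.

Lemma ldegE L : lpoly L != 0 -> ldeg L = (size (lpoly L)).-1%:Z - (lshift L)%:Z.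
Proof. by rewrite /ldeg => /negbTE ->. Qed.

Lemma eq_ldeg_lfrac L M : lfrac L = lfrac M -> ldeg L = ldeg M.
Proof.
move=> /eqP/lfrac_eqP LM.
have [L0|L_neq0] := eqVneq (lpoly L) 0.
  move: LM; rewrite L0 mul0r => /esym/eqP.
  by rewrite mulf_eq0 (negbTE (polyXn_neq0 _)) orbF => /eqP M0; rewrite !ldeg_poly0.
have [M0|M_neq0] := eqVneq (lpoly M) 0.
  move: LM; rewrite M0 mul0r => /eqP.
  by rewrite mulf_eq0 (negbTE (polyXn_neq0 _)) orbF (negbTE L_neq0).
have := congr1 (fun p : {poly 'F_2} => size p) LM; rewrite !size_mulXn // !ldegE //.
have := size_poly_gt0 (lpoly L); have := size_poly_gt0 (lpoly M).
rewrite L_neq0 M_neq0; lia.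
Qed.

(* [lia] sees convertible but syntactically different [size _] terms as distinct
   atoms; abstracting them with [set] first identifies them. *)
Ltac size_lia :=
  repeat match goal with H : context [size _] |- _ => revert H end;
  rewrite -?subn1;
  repeat match goal with
  | |- context [size ?x] => let s := fresh "sz" in set s := size x; clearbody s
  end; intros; lia.

Lemma ldegM L M : lpoly L != 0 -> lpoly M != 0 -> ldeg (lmul L M) = ldeg L + ldeg M.
Proof.
move=> L_neq0 M_neq0; rewrite !ldegE ?mulf_neq0 //= size_mul //.
have := size_poly_gt0 (lpoly L); have := size_poly_gt0 (lpoly M).
rewrite L_neq0 M_neq0; size_lia.
Qed.

Lemma ldegM_le L M : 0 <= ldeg L -> 0 <= ldeg M -> ldeg (lmul L M) <= ldeg L + ldeg M.
Proof.
move=> L_ge0 M_ge0.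
have [L0|L_neq0] := eqVneq (lpoly L) 0; first by rewrite ldeg_poly0 /= ?L0 ?mul0r ?addr_ge0.
have [M0|M_neq0] := eqVneq (lpoly M) 0; first by rewrite ldeg_poly0 /= ?M0 ?mulr0 ?addr_ge0.
by rewrite ldegM.
Qed.

Lemma size_lpolyMXn L j : (size (lpoly L * 'X^j))%:Z <= j%:Z + ldeg L + (lshift L)%:Z + 1.
Proof.
have [L0|L_neq0] := eqVneq (lpoly L) 0.
  by rewrite L0 mul0r size_poly0 ldeg_poly0 //; size_lia.
rewrite size_mulXn // ldegE //.
have := size_poly_gt0 (lpoly L); rewrite L_neq0; size_lia.
Qed.

Lemma ldegD_le L M B : 0 <= B -> ldeg L <= B -> ldeg M <= B -> ldeg (ladd L M) <= B.
Proof.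
move=> B_ge0 LB MB.
have [S0|S_neq0] := eqVneq (lpoly (ladd L M)) 0; first by rewrite ldeg_poly0.
rewrite ldegE //.
have := size_poly_gt0 (lpoly (ladd L M)); rewrite S_neq0 /=.
have := size_polyD (lpoly L * 'X^(lshift M)) (lpoly M * 'X^(lshift L)).
have := size_lpolyMXn L (lshift M); have := size_lpolyMXn M (lshift L).
size_lia.
Qed.

Lemma ldegDl L M : lpoly L != 0 -> ldeg M < ldeg L -> ldeg (ladd L M) = ldeg L.
Proof.
move=> L_neq0 ML.
have szL := size_poly_gt0 (lpoly L); rewrite L_neq0 in szL.
have szLX : size (lpoly L * 'X^(lshift M)) = (lshift M + size (lpoly L))%N.
  by rewrite size_mulXn.
have szS : size (lpoly (ladd L M)) = (lshift M + size (lpoly L))%N.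
  rewrite /= size_polyDl szLX //.
  have := size_lpolyMXn M (lshift L); move: ML; rewrite (ldegE L_neq0); size_lia.
have S_neq0 : lpoly (ladd L M) != 0 by rewrite -size_poly_gt0 szS; size_lia.
by rewrite !ldegE // szS /=; size_lia.
Qed.

Lemma palindrome_ldeg_ge0 L : palindrome L -> 0 <= ldeg L.
Proof.
move=> PL; have [L0|L_neq0] := eqVneq (lpoly L) 0; first by rewrite ldeg_poly0.
have : lcoef L (- ldeg L) != 0.
  by rewrite PL ldegE // lcoef_shift -lead_coefE lead_coef_eq0.
move/lcoef_support; rewrite ldegE //.
have := size_poly_gt0 (lpoly L); rewrite L_neq0; size_lia.
Qed.

Lemma pchar_frac_F2 : 2%N \in [pchar FF].
Proof.
apply: (rmorph_pchar (@FracField.tofrac _)); rewrite pchar_poly.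
exact: (@pchar_Fp 2).
Qed.

Lemma cayley_hamilton_mx2_char2 (K : comNzRingType) (a b c d x y : K) :
    2%N \in [pchar K] -> a * d - b * c = 1 ->
  a * (a * x + b * y) + b * (c * x + d * y) = (a + d) * (a * x + b * y) + x /\
  c * (a * x + b * y) + d * (c * x + d * y) = (a + d) * (c * x + d * y) + y.
Proof.
move=> char2 det1; split.
  have -> : a * (a * x + b * y) + b * (c * x + d * y) =
            (a + d) * (a * x + b * y) - (a * d - b * c) * x by ring.
  by rewrite det1 mul1r (oppr_pchar2 char2).
have -> : c * (a * x + b * y) + d * (c * x + d * y) =
          (a + d) * (c * x + d * y) - (a * d - b * c) * y by ring.
by rewrite det1 mul1r (oppr_pchar2 char2).
Qed.

Lemma mx2_kernel_det1 (K : comNzRingType) (a b c d x y : K) : a * d - b * c = 1 ->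
  a * x + b * y = 0 -> c * x + d * y = 0 -> x = 0 /\ y = 0.
Proof.
move=> det1 r1 r2; split.
  have -> : x = d * (a * x + b * y) - b * (c * x + d * y) + (1 - (a * d - b * c)) * x
    by ring.
  by rewrite r1 r2 det1 subrr mul0r !mulr0 subrr add0r.
have -> : y = a * (c * x + d * y) - c * (a * x + b * y) + (1 - (a * d - b * c)) * y
  by ring.
by rewrite r1 r2 det1 subrr mul0r !mulr0 subrr add0r.
Qed.

Lemma CSCA_lfrac_det a : CSCA a ->
  lfrac (a i0 i0) * lfrac (a i1 i1) - lfrac (a i0 i1) * lfrac (a i1 i0) = 1.
Proof. by case=> _ /leq_lfrac; rewrite lfracB !lfracM lfrac1. Qed.

Lemma lfrac_lact_sq a v : CSCA a ->
  lfrac (lact a (lact a v)).1 = lfrac (ltr a) * lfrac (lact a v).1 + lfrac v.1 /\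
  lfrac (lact a (lact a v)).2 = lfrac (ltr a) * lfrac (lact a v).2 + lfrac v.2.
Proof.
move=> Ha; rewrite /lact /ltr /= !(lfracD, lfracM).
exact: cayley_hamilton_mx2_char2 pchar_frac_F2 (CSCA_lfrac_det Ha).
Qed.

Definition lvec_eq0 (v : laurent * laurent) := (lpoly v.1 == 0) && (lpoly v.2 == 0).

Lemma lact_neq0 a v : CSCA a -> ~~ lvec_eq0 v -> ~~ lvec_eq0 (lact a v).
Proof.
move=> Ha; apply: contra; rewrite /lvec_eq0 -!lfrac_eq0 /lact /= !(lfracD, lfracM).
move=> /andP[/eqP r1 /eqP r2].
by have [-> ->] := mx2_kernel_det1 (CSCA_lfrac_det Ha) r1 r2; rewrite eqxx.
Qed.

Lemma palindrome_lact a v : CSCA a -> palindrome v.1 -> palindrome v.2 ->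
  palindrome (lact a v).1 /\ palindrome (lact a v).2.
Proof. by case=> Pa _ P1 P2; split; apply: palindromeD; apply: palindromeM. Qed.

Lemma lgcd_one_neq0 v : lgcd_one v.1 v.2 -> ~~ lvec_eq0 v.
Proof.
move=> xy; apply/negP => /andP[/eqP x0 /eqP y0].
(* 1 + u divides 0 but is not a unit, as it vanishes at u = 1. *)
pose d := Laurent 0 ('X + 1).
have d_dvd L : lpoly L = 0 -> ldvd d L.
  by move=> L0; exists lzero => k; rewrite !lcoef_poly0 //= mulr0.
have [e /leq_lfrac /eqP/lfrac_eqP] := xy d (d_dvd _ x0) (d_dvd _ y0).
move=> /(congr1 (fun p : {poly 'F_2} => p.[1])) /=.
rewrite expr0 mulr1 mul1r hornerXn expr1n hornerM hornerD hornerX hornerC.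
by have -> : (1 + 1 : 'F_2) = 0 by apply/eqP.
Qed.

Lemma ldeg_recurrence_le Z T X Y : lfrac Z = lfrac T * lfrac X + lfrac Y ->
    0 <= ldeg T -> 0 <= ldeg X -> 0 <= ldeg Y ->
  ldeg Z <= Num.max (ldeg T + ldeg X) (ldeg Y).
Proof.
move=> ZE T_ge0 X_ge0 Y_ge0.
rewrite (@eq_ldeg_lfrac Z (ladd (lmul T X) Y)) ?lfracD ?lfracM //.
by apply: ldegD_le; rewrite le_max ?Y_ge0 ?lexx ?orbT ?ldegM_le.
Qed.

Lemma ldeg_recurrence_eq Z T X Y : lfrac Z = lfrac T * lfrac X + lfrac Y ->
    lpoly T != 0 -> lpoly X != 0 -> ldeg Y < ldeg T + ldeg X ->
  ldeg Z = ldeg T + ldeg X.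
Proof.
move=> ZE T_neq0 X_neq0 YTX.
rewrite (@eq_ldeg_lfrac Z (ladd (lmul T X) Y)) ?lfracD ?lfracM //.
by rewrite ldegDl ?ldegM //= mulf_neq0.
Qed.

Lemma vdeg_attained v : 0 <= ldeg v.1 -> 0 <= ldeg v.2 -> ~~ lvec_eq0 v ->
  (lpoly v.1 != 0 /\ ldeg v.1 = vdeg v) \/ (lpoly v.2 != 0 /\ ldeg v.2 = vdeg v).
Proof.
rewrite /lvec_eq0 negb_and /vdeg => ge1 ge2.
have [z1|n1] := eqVneq (lpoly v.1) 0; have [z2|n2] := eqVneq (lpoly v.2) 0 => //= _.
- by right; move: ge1; rewrite ldeg_poly0 // => _; split=> //; lia.
- by left; move: ge2; rewrite ldeg_poly0 // => _; split=> //; lia.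
- by have [le12|lt21] := leP (ldeg v.1) (ldeg v.2); [right | left]; split=> //; lia.
Qed.

Lemma ldeg_ltr_ge0 a : CSCA a -> 0 <= ldeg (ltr a).
Proof. by case=> Pa _; apply/palindrome_ldeg_ge0/palindromeD. Qed.

Section Orbit.

Variables (a : lmat) (xi : laurent * laurent).
Hypotheses (Ha : CSCA a) (P1 : palindrome xi.1) (P2 : palindrome xi.2).

Local Notation x t := (lpow_act a t xi).
Local Notation d := (ldeg (ltr a)).

Lemma palindrome_orbit t : palindrome (x t).1 /\ palindrome (x t).2.
Proof. by elim: t => // t [Q1 Q2]; exact: palindrome_lact. Qed.

Lemma orbit_neq0 t : ~~ lvec_eq0 xi -> ~~ lvec_eq0 (x t).
Proof. by move=> xi_neq0; elim: t => //= t; apply: lact_neq0. Qed.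

Lemma nlen_ge0 t : 0 <= nlen a xi t.
Proof.
have [Q1 Q2] := palindrome_orbit t.
by rewrite /nlen /vdeg le_max palindrome_ldeg_ge0.
Qed.

Lemma nlen_rec_le t : nlen a xi t.+2 <= Num.max (d + nlen a xi t.+1) (nlen a xi t).
Proof.
have d_ge0 := ldeg_ltr_ge0 Ha.
have [[Q1 Q2] [R1 R2]] := (palindrome_orbit t, palindrome_orbit t.+1).
have [E1 E2] := lfrac_lact_sq (x t) Ha.
have := ldeg_recurrence_le E1 d_ge0 (palindrome_ldeg_ge0 R1) (palindrome_ldeg_ge0 Q1).
have := ldeg_recurrence_le E2 d_ge0 (palindrome_ldeg_ge0 R2) (palindrome_ldeg_ge0 Q2).
rewrite /nlen /vdeg /=; lia.
Qed.

Lemma nlen_rec_eq : ~~ lvec_eq0 xi -> 0 < d ->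
  forall t, nlen a xi t < d + nlen a xi t.+1 -> nlen a xi t.+2 = d + nlen a xi t.+1.
Proof.
move=> xi_neq0 d_gt0 t lt_t.
have T_neq0 : lpoly (ltr a) != 0 by apply: contraTneq d_gt0 => /ldeg_poly0 ->.
have [[Q1 Q2] [R1 R2]] := (palindrome_orbit t, palindrome_orbit t.+1).
have [E1 E2] := lfrac_lact_sq (x t) Ha.
have := nlen_rec_le t; move: lt_t; rewrite /nlen /vdeg.
have [] := vdeg_attained (palindrome_ldeg_ge0 R1) (palindrome_ldeg_ge0 R2)
  (orbit_neq0 t.+1 xi_neq0).
- by case=> n1; have := ldeg_recurrence_eq E1 T_neq0 n1; rewrite /vdeg /=; lia.
- by case=> n2; have := ldeg_recurrence_eq E2 T_neq0 n2; rewrite /vdeg /=; lia.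
Qed.

End Orbit.

Lemma max_rec_bounded (D : nat -> int) :
  (forall t, D t.+2 <= Num.max (D t.+1) (D t)) -> forall t, D t <= Num.max (D 0%N) (D 1%N).
Proof.
move=> rec t; suff : D t <= Num.max (D 0%N) (D 1%N) /\ D t.+1 <= Num.max (D 0%N) (D 1%N).
  by case.
by elim: t => [|t [IH1 IH2]]; [split; lia | split=> //; have := rec t; lia].
Qed.

Lemma nonneg_seq_strict_step (D : nat -> int) (d : int) : 0 < d -> (forall t, 0 <= D t) ->
  exists t, D t < d + D t.+1.
Proof.
move=> d_gt0 D_ge0.
have descent n : (exists t, D t < d + D t.+1) \/ D n <= D 0%N - n%:Z.
  elim: n => [|n [|IH]]; [by right; lia | by left |].
  by have [lt_n|ge_n] := ltP (D n) (d + D n.+1); [left; exists n | right; lia].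
by have [//|] := descent `|D 0%N|.+1; have := D_ge0 `|D 0%N|.+1; lia.
Qed.

Lemma max_rec_near_linear (D : nat -> int) (d : int) :
    0 <= d -> (forall t, 0 <= D t) ->
    (forall t, D t.+2 <= Num.max (d + D t.+1) (D t)) ->
    (0 < d -> forall t, D t < d + D t.+1 -> D t.+2 = d + D t.+1) ->
  exists K T, forall t, (T <= t)%N -> `|D t - d * t%:Z| <= K.
Proof.
move=> d_ge0 D_ge0 rec_le rec_eq.
have [d0|d_neq0] := eqVneq d 0.
  exists (Num.max (D 0%N) (D 1%N)), 0%N => t _.
  rewrite d0 mul0r subr0 ger0_norm //; apply: max_rec_bounded => s.
  by rewrite -[D s.+1]add0r -d0.
have d_gt0 : 0 < d by rewrite lt_def d_neq0.
have [t0 lt_t0] := nonneg_seq_strict_step d_gt0 D_ge0.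
have lin j : D (t0 + j)%N < d + D (t0 + j).+1 /\ D (t0 + j).+1 = D t0.+1 + j%:Z * d.
  elim: j => [|j [lt_j eq_j]]; first by rewrite addn0; split=> //; lia.
  by have := rec_eq d_gt0 _ lt_j; rewrite !addnS; nia.
exists `|D t0.+1 - d * t0.+1%:Z|, t0.+1 => t le_t.
have [j ->] : exists j, t = (t0 + j).+1 by exists (t - t0.+1)%N; lia.
suff -> : D (t0 + j).+1 - d * (t0 + j).+1%:Z = D t0.+1 - d * t0.+1%:Z by [].
by rewrite (lin j).2 -[(t0 + j).+1]addn1 -[t0.+1]addn1 !PoszD; ring.
Qed.

Lemma cvg_ratio_near_linear (R : realType) (D : nat -> int) (d K : int) (T : nat) :
  (forall t, (T <= t)%N -> `|D t - d * t%:Z| <= K) ->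
  (fun t : nat => (D t)%:~R / t%:R : R) @ \oo --> (d%:~R : R).
Proof.
move=> dev; apply/cvgrPdist_lt => e e_gt0; near=> t.
have le_Tt : (T <= t)%N by near: t; exact: nbhs_infty_ge.
have lt_Kt : (K%:~R / e < t%:R :> R) by near: t; exact: nbhs_infty_gtr.
have t_gt0 : (0 < t%:R :> R) by rewrite ltr0n; near: t; exact: nbhs_infty_gt.
have -> : (d%:~R - (D t)%:~R / t%:R : R) = (d * t%:Z - D t)%:~R / t%:R.
  by rewrite intrB intrM -pmulrn; field; lra.
rewrite normrM normfV [`|t%:R|]ger0_norm ?ler0n // -intr_norm distrC ltr_pdivrMr //.
apply: le_lt_trans (_ : K%:~R < _); first by rewrite ler_int dev.
by rewrite -ltr_pdivrMl // mulrC.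
Unshelve. all: by end_near.
Qed.

Theorem mainTheorem16 (R : realType) (a : lmat) (xi : laurent * laurent) :
  CSCA a -> palindrome xi.1 -> palindrome xi.2 -> lgcd_one xi.1 xi.2 ->
  (fun t : nat => ((nlen a xi t)%:~R / t%:R : R)) @ \oo --> ((ldeg (ltr a))%:~R : R).
Proof.
move=> Ha P1 P2 /lgcd_one_neq0 xi_neq0.
have [K [T dev]] := max_rec_near_linear (ldeg_ltr_ge0 Ha) (nlen_ge0 Ha P1 P2)
  (nlen_rec_le Ha P1 P2) (nlen_rec_eq Ha P1 P2 xi_neq0).
exact: cvg_ratio_near_linear dev.
Qed.
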